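(* For every $x\in\mathcal X$ there exists $\mu_0(x)\ge 0$ such that for all $\mu\ge\mu_0(x)$, $D^\mu(x)=\mathbb 1\{T(x)\ge 1-\alpha\}$ and $C^\mu(x)\in\arg\max_{C\in\mathcal I}p_C(x)$; moreover, if several sets share this maximal value of $p_C(x)$, then $C^\mu(x)$ is one with the largest weight $w(C)$ among them.
   Context: Let $(X,Y)\sim P_{XY}$ on $\mathcal X\times\mathcal Y$, $\alpha\in(0,1)$. $\mathcal I$ is a finite collection of subsets of $\mathcal Y$ enumerated in a fixed lexicographic order, $w:\mathcal I\to(0,B)$ a bounded positive weight. For $C\in\mathcal I$ let $p_C(x)=\mathbb P(Y\in C\mid X=x)$, $\ell_{x,C}(\mu)=w(C)p_C(x)+\mu(p_C(x)-(1-\alpha))$ for $\mu\ge0$, $\mathcal U_x(\mu)=\max_{C\in\mathcal I}\ell_{x,C}(\mu)$. $C^\mu(x)$ is a maximizer of $\ell_{x,C}(\mu)$ over $C\in\mathcal I$, ties broken in favor of the largest $w(C)$ and then smallest index; $D^\mu(x)=\mathbb 1\{\mathcal U_x(\mu)\ge0\}$; $T(x)=\max_{C\in\mathcal I}p_C(x)$. *)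

From HB Require Import structures.
From mathcomp Require Import all_boot all_order all_algebra.
From mathcomp Require Import all_classical all_reals all_analysis.
Set Implicit Arguments. Unset Strict Implicit. Unset Printing Implicit Defensive.
Import Order.TTheory GRing.Theory Num.Theory.
Local Open Scope classical_set_scope.
Local Open Scope ring_scope.

(* The finite collection I = {C_0, ..., C_n} of subsets of Y is indexed by
   'I_n.+1 in its fixed (lexicographic) enumeration order; C : 'I_n.+1 -> set Y.
   k is a regular version of the conditional distribution of Y given X, so that
   p_C(x) = P(Y \in C | X = x) = k x C. *)

Section Defs.
Context {dx dy : measure_display} {X : measurableType dx} {Y : measurableType dy}
  {R : realType}.

Definition is_cond_law (P : probability (X * Y)%type R) (k : R.-pker X ~> Y) :=
  forall (A : set X) (B : set Y), measurable A -> measurable B ->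
    P (A `*` B) = (\int[P]_(z in A `*` [set: Y]) k z.1 B)%E.

Variables (k : R.-pker X ~> Y) (n : nat) (C : 'I_n.+1 -> set Y)
  (w : 'I_n.+1 -> R) (alpha : R).

Definition pC (x : X) (i : 'I_n.+1) : R := fine (k x (C i)).

Definition ell (x : X) (mu : R) (i : 'I_n.+1) : R :=
  w i * pC x i + mu * (pC x i - (1 - alpha)).

Definition Ux (x : X) (mu : R) : R :=
  \big[Num.max/ell x mu ord0]_(i < n.+1) ell x mu i.

Definition Tx (x : X) : R := \big[Num.max/pC x ord0]_(i < n.+1) pC x i.

Definition is_sel (x : X) (mu : R) (i : 'I_n.+1) : bool :=
  [forall j, (ell x mu j < ell x mu i) ||
    ((ell x mu j == ell x mu i) &&
      ((w j < w i) || ((w j == w i) && (i <= j)%N)))].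

Definition Cmu (x : X) (mu : R) : 'I_n.+1 := odflt ord0 [pick i | is_sel x mu i].

Definition Dmu (x : X) (mu : R) : bool := 0 <= Ux x mu.

End Defs.

From HB Require Import structures.
From mathcomp Require Import all_boot all_order all_algebra.
From mathcomp Require Import all_classical all_reals all_analysis.
From mathcomp Require Import lra.
Import Order.TTheory GRing.Theory Num.Theory.
Local Open Scope classical_set_scope.
Local Open Scope ring_scope.

(* In l_{x,C}(mu) = w(C) p_C(x) + mu (p_C(x) - (1 - alpha)) the first term is
   bounded by B p_C(x), so once mu exceeds B p_i / (p_j - p_i) for every gap
   p_i < p_j, and B T / (1 - alpha - T) when T < 1 - alpha, the second term
   decides: the maximizer of l maximizes p_C(x), and U_x(mu) >= 0 iff
   T >= 1 - alpha.  Among the sets with p_C(x) = T the objective is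
   w(C) T + const, so the maximizer has the largest weight; if T = 0 all of
   them tie and the tie-break of C^mu picks the largest weight. *)

Section LexicographicMaximum.
Context {R : realDomainType} {n : nat}.
Variables (F w : 'I_n.+1 -> R).

Definition is_lexmax (i : 'I_n.+1) : bool :=
  [forall j, (F j < F i) ||
    ((F j == F i) && ((w j < w i) || ((w j == w i) && (i <= j)%N)))].

Lemma lexmax_exists : exists i, is_lexmax i.
Proof.
case: (@arg_maxP _ _ _ ord0 xpredT F erefl) => iF _ iF_max.
have [iw /eqP Fiw iw_max] :=
  @arg_maxP _ _ _ iF (fun i => F i == F iF) w (eqxx _).
have [i /andP[/eqP Fi /eqP wi] i_min] :=
  @arg_minnP _ iw (fun i => (F i == F iF) && (w i == w iw)) val
    (introT andP (conj (introT eqP Fiw) (eqxx _))).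
exists i; apply/forallP => j; rewrite Fi wi.
have [//|FjF] /= := ltrP (F j) (F iF).
have Fj : F j = F iF by apply/le_anti; rewrite FjF andbT; exact: iF_max.
rewrite Fj eqxx /=.
have [//|wjw] /= := ltrP (w j) (w iw).
have wj : w j = w iw.
  by apply/le_anti; rewrite wjw andbT; apply: iw_max; rewrite Fj.
by rewrite wj eqxx /= i_min // Fj wj !eqxx.
Qed.

Lemma lexmax_maximal i : is_lexmax i -> forall j, F j <= F i.
Proof.
by move=> /forallP imax j; case/orP: (imax j) => [/ltW|/andP[/eqP-> _]].
Qed.

Lemma lexmax_tie i : is_lexmax i -> forall j, F j = F i -> w j <= w i.
Proof.
move=> /forallP imax j Fj; move: (imax j); rewrite Fj ltxx eqxx /=.
by case/orP=> [/ltW|/andP[/eqP-> _]].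
Qed.

End LexicographicMaximum.

Arguments lexmax_maximal {R n F w i}.
Arguments lexmax_tie {R n F w i}.

Lemma Cmu_lexmax {dx dy : measure_display} {X : measurableType dx}
    {Y : measurableType dy} {R : realType} {n : nat} (k : R.-pker X ~> Y)
    (C : 'I_n.+1 -> set Y) (w : 'I_n.+1 -> R) (alpha : R) (x : X) (mu : R) :
  is_lexmax (ell k C w alpha x mu) w (Cmu k C w alpha x mu).
Proof.
rewrite /Cmu; case: pickP => [i //|no_sel].
have [i imax] := lexmax_exists (ell k C w alpha x mu) w.
by move: (no_sel i); rewrite /is_sel -/(is_lexmax _ _ i) imax.
Qed.

Section PenalizedScore.
Context {R : realFieldType} {n : nat}.
Variables (p w : 'I_n.+1 -> R) (c B : R).
Hypotheses (p_ge0 : forall i, 0 <= p i) (w_ge0 : forall i, 0 <= w i)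
  (w_leB : forall i, w i <= B).
Variable (im : 'I_n.+1).
Hypothesis p_le_max : forall i, p i <= p im.

Let B_ge0 : 0 <= B := le_trans (w_ge0 im) (w_leB im).

(* [ell k C w alpha x] unfolds to [score (pC k C x) w (1 - alpha)]. *)
Definition score (mu : R) (i : 'I_n.+1) : R := w i * p i + mu * (p i - c).

Definition gap_threshold (a b : R) : R := if a < b then B * a / (b - a) else 0.

Lemma gap_threshold_ge0 a b : 0 <= a -> 0 <= gap_threshold a b.
Proof.
move=> a_ge0; rewrite /gap_threshold; case: ifP => // ab.
by rewrite divr_ge0 ?mulr_ge0 ?subr_ge0 ?(ltW ab).
Qed.

Lemma gt_gap_threshold [a b mu] :
  a < b -> gap_threshold a b < mu -> B * a < mu * (b - a).
Proof. by move=> ab; rewrite /gap_threshold ab ltr_pdivrMr ?subr_gt0. Qed.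

Lemma score_lt_max mu i :
  p i < p im -> gap_threshold (p i) (p im) < mu -> score mu i < score mu im.
Proof.
move=> lt_i /(gt_gap_threshold lt_i) gap.
have wi : w i * p i <= B * p i by rewrite ler_wpM2r.
have wim : 0 <= w im * p im by rewrite mulr_ge0.
rewrite /score; lra.
Qed.

Lemma lexmax_score_max mu i :
  (forall j, gap_threshold (p j) (p im) < mu) ->
  is_lexmax (score mu) w i -> p i = p im.
Proof.
move=> large imax; apply/le_anti; rewrite p_le_max leNgt /=.
apply/negP => lt_i.
by have := lexmax_maximal imax im; rewrite leNgt score_lt_max.
Qed.

Lemma lexmax_score_tie mu i :
  is_lexmax (score mu) w i -> forall j, p j = p i -> w j <= w i.
Proof.
move=> imax j pj; have [pi_gt0|pi_le0] := ltrP 0 (p i).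
  by have := lexmax_maximal imax j; rewrite /score pj lerD2r ler_pM2r.
have pi0 : p i = 0 by apply/le_anti; rewrite pi_le0 p_ge0.
by apply: (lexmax_tie imax); rewrite /score pj pi0 !mulr0.
Qed.

Lemma score_bigmax_ge0 mu : gap_threshold (p im) c < mu ->
  (0 <= \big[Num.max/score mu ord0]_i score mu i) = (c <= p im).
Proof.
move=> large.
have mu_gt0 := le_lt_trans (gap_threshold_ge0 (p im) c (p_ge0 im)) large.
have [c_le|lt_c] := lerP c (p im).
  apply: le_trans (le_bigmax _ _ im).
  by rewrite /score addr_ge0 ?mulr_ge0 ?subr_ge0 ?(ltW mu_gt0).
have gap := gt_gap_threshold lt_c large.
have score_lt0 i : score mu i < 0.
  have wi : w i * p i <= B * p im.
    exact: le_trans (ler_wpM2r (p_ge0 i) (w_leB i))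
                    (ler_wpM2l B_ge0 (p_le_max i)).
  have pi : mu * (p i - c) <= mu * (p im - c).
    by rewrite ler_wpM2l ?(ltW mu_gt0) // lerD2r.
  rewrite /score; lra.
by apply/negbTE; rewrite -ltNge; apply: bigmax_lt.
Qed.

(* The summand 1 turns every threshold into a strict bound. *)
Definition penalty_threshold : R :=
  1 + gap_threshold (p im) c + \sum_i gap_threshold (p i) (p im).

Lemma penalty_threshold_ge0 : 0 <= penalty_threshold.
Proof.
apply: addr_ge0; last by apply: sumr_ge0 => i _; apply: gap_threshold_ge0.
by rewrite addr_ge0 ?(gap_threshold_ge0 _ _ (p_ge0 im)).
Qed.

Lemma penalty_threshold_gt mu : penalty_threshold <= mu ->
  gap_threshold (p im) c < mu /\ forall i, gap_threshold (p i) (p im) < mu.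
Proof.
rewrite /penalty_threshold => large.
have gap_ge0 i : 0 <= gap_threshold (p i) (p im) by exact: gap_threshold_ge0.
have sum_ge0 : 0 <= \sum_i gap_threshold (p i) (p im).
  by apply: sumr_ge0 => i _; apply: gap_ge0.
have max_ge0 := gap_threshold_ge0 (p im) c (p_ge0 im).
split; first lra.
move=> i; have := large; rewrite (bigD1 i) //=.
have : 0 <= \sum_(j | j != i) gap_threshold (p j) (p im).
  by apply: sumr_ge0 => j _; apply: gap_ge0.
lra.
Qed.

End PenalizedScore.

Arguments penalty_threshold_ge0 {R n p w c B}.
Arguments penalty_threshold_gt {R n p w c B}.
Arguments lexmax_score_max {R n p w c B}.
Arguments score_bigmax_ge0 {R n p w c B}.
Arguments lexmax_score_tie {R n p w c}.

Theorem proposition3 (dx dy : measure_display) (X : measurableType dx)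
  (Y : measurableType dy) (R : realType)
  (P : probability (X * Y)%type R) (k : R.-pker X ~> Y)
  (hk : is_cond_law P k)
  (alpha : R) (halpha : 0 < alpha < 1)
  (n : nat) (C : 'I_n.+1 -> set Y) (hC : forall i, measurable (C i))
  (hCinj : injective C)
  (B : R) (w : 'I_n.+1 -> R) (hw : forall i, 0 < w i < B) :
  forall x : X, exists mu0 : R, 0 <= mu0 /\
    forall mu : R, mu0 <= mu ->
      [/\ Dmu k C w alpha x mu = (1 - alpha <= Tx k C x),
          (forall j, pC k C x j <= pC k C x (Cmu k C w alpha x mu)) &
          (forall j, pC k C x j = pC k C x (Cmu k C w alpha x mu) ->
                     w j <= w (Cmu k C w alpha x mu))].
Proof.
move=> x; set p := pC k C x.
have p_ge0 i : 0 <= p i by apply: fine_ge0; apply: measure_ge0.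
have w_ge0 i : 0 <= w i by case/andP: (hw i) => /ltW.
have w_leB i : w i <= B by case/andP: (hw i) => _ /ltW.
have [im _ im_max] := @arg_maxP _ _ _ ord0 xpredT p erefl.
have p_le_max i : p i <= p im by exact: im_max.
have Tx_max : Tx k C x = p im.
  apply/le_anti; rewrite le_bigmax andbT.
  by apply: bigmax_le => [|j _]; apply: p_le_max.
exists (penalty_threshold p (1 - alpha) B im).
split; first exact: penalty_threshold_ge0 p_ge0 w_ge0 w_leB im.
move=> mu /(penalty_threshold_gt p_ge0 w_ge0 w_leB im) [large_c large_p].
have sel := Cmu_lexmax k C w alpha x mu.
have p_sel := lexmax_score_max p_ge0 w_ge0 w_leB im p_le_max _ _ large_p sel.
split.
- rewrite /Dmu /Ux Tx_max.
  exact: score_bigmax_ge0 p_ge0 w_ge0 w_leB im p_le_max _ large_c.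
- by move=> j; rewrite p_sel.
- exact: lexmax_score_tie p_ge0 _ _ sel.
Qed.
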